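(* Let $N$ be a finite set of $n\ge 1$ agents, each with value $v_i\ge 0$ and budget $b_i\ge 0$, and let $m>0$. Let $j$ be an agent chosen uniformly at random from $N$. Then $$\Pr\Big[\mathrm{OPT}(N\setminus\{j\},m)\ \ge\ \tfrac12\,\mathrm{OPT}(N,m)\Big]\ \ge\ 1-\frac1n .$$
   Context: For a set $S$ of agents and an amount $k>0$ of items, the optimal uniform-price revenue is $\mathrm{OPT}(S,k)=\max_{p>0}\ \min\Big(\sum_{i\in S,\ v_i\ge p}\frac{b_i}{p},\ k\Big)\cdot p$, i.e., the maximum revenue from selling at most $k$ items to agents of $S$ at a single price per item $p$, where each agent with $v_i\ge p$ buys as much as her budget allows; $p^\ast_{S,k}$ denotes a maximizing price. *)

From Stdlib Require Import Reals Lra Lia Classical ClassicalEpsilon.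
Open Scope R_scope.

(* Agents are indexed 0 .. n-1; v i = value, b i = budget.
   A set of agents S is a boolean predicate on nat (only indices < n matter). *)

Fixpoint sumR (n : nat) (f : nat -> R) : R :=
  match n with
  | O => 0
  | S n' => sumR n' f + f n'
  end.

Definition revenue (n : nat) (v b : nat -> R) (S : nat -> bool) (k p : R) : R :=
  Rmin (sumR n (fun i => if S i then (if Rle_dec p (v i) then b i / p else 0) else 0)) k * p.

Definition is_OPT (n : nat) (v b : nat -> R) (S : nat -> bool) (k r : R) : Prop :=
  (exists p, 0 < p /\ revenue n v b S k p = r) /\
  (forall p, 0 < p -> revenue n v b S k p <= r).

(* OPT(S,k) = max_{p>0} revenue (the maximum, chosen by Hilbert's epsilon;
   the maximum exists and is unique). *)
Definition OPT (n : nat) (v b : nat -> R) (S : nat -> bool) (k : R) : R :=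
  epsilon (inhabits 0) (fun r => is_OPT n v b S k r).

Definition allN (n : nat) : nat -> bool := fun i => Nat.ltb i n.
Definition minus1 (n j : nat) : nat -> bool :=
  fun i => andb (Nat.ltb i n) (negb (Nat.eqb i j)).

Definition prob_unif (n : nat) (P : nat -> Prop) : R :=
  sumR n (fun j => if excluded_middle_informative (P j) then 1 else 0) / INR n.

(* Fix an optimal price p for N and let B be the total budget of the agents
   of N with value at least p, so that OPT(N, m) = min(B, m p).  Removing an
   agent j keeps p available, and the revenue at p only drops if v_j >= p,
   by b_j.  Hence OPT(N \ {j}, m) < OPT(N, m) / 2 forces b_j > B / 2, which
   can happen for at most one agent j: two of them would have budgets
   summing to more than B. *)

From Stdlib Require Import Reals Lra Lia Classical ClassicalEpsilon.
Open Scope R_scope.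

Lemma sumR_ext n f g :
  (forall i, (i < n)%nat -> f i = g i) -> sumR n f = sumR n g.
Proof.
  induction n as [|n IH]; intros H; simpl; [reflexivity|].
  rewrite IH, H by (lia || (intros; apply H; lia)). reflexivity.
Qed.

Lemma sumR_le n f g :
  (forall i, (i < n)%nat -> f i <= g i) -> sumR n f <= sumR n g.
Proof.
  induction n as [|n IH]; intros H; simpl; [lra|].
  assert (sumR n f <= sumR n g) by (apply IH; intros; apply H; lia).
  assert (f n <= g n) by (apply H; lia).
  lra.
Qed.

Lemma sumR_const n c : sumR n (fun _ => c) = INR n * c.
Proof. induction n as [|n IH]; [simpl; ring|]. rewrite S_INR. simpl. rewrite IH. ring. Qed.

Lemma sumR_div n f p : sumR n (fun i => f i / p) = sumR n f / p.
Proof. induction n as [|n IH]; simpl; [unfold Rdiv; ring|]. rewrite IH. unfold Rdiv; ring. Qed.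

Lemma sumR_nonneg n f : (forall i, (i < n)%nat -> 0 <= f i) -> 0 <= sumR n f.
Proof.
  intros H. rewrite <- (Rmult_0_r (INR n)), <- sumR_const. exact (sumR_le n _ _ H).
Qed.

Lemma sumR_split_at n f j :
  (j < n)%nat -> sumR n f = sumR n (fun i => if Nat.eqb i j then 0 else f i) + f j.
Proof.
  induction n as [|n IH]; intros Hj; [lia|]. simpl.
  destruct (Nat.eq_dec j n) as [->|Hne].
  - rewrite Nat.eqb_refl.
    rewrite (sumR_ext n (fun i => if Nat.eqb i n then 0 else f i) f); [lra|].
    intros i Hi. replace (Nat.eqb i n) with false by (symmetry; apply Nat.eqb_neq; lia).
    reflexivity.
  - replace (Nat.eqb n j) with false by (symmetry; apply Nat.eqb_neq; lia).
    rewrite IH by lia. lra.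
Qed.

Lemma sumR_le_term n f j :
  (forall i, (i < n)%nat -> 0 <= f i) -> (j < n)%nat -> f j <= sumR n f.
Proof.
  intros Hf Hj. rewrite (sumR_split_at n f j Hj).
  assert (0 <= sumR n (fun i => if Nat.eqb i j then 0 else f i)); [|lra].
  apply sumR_nonneg. intros i Hi. destruct (Nat.eqb i j); [lra | auto].
Qed.

Lemma sumR_indicator_ge n (P : nat -> Prop) :
  (forall j1 j2, (j1 < n)%nat -> (j2 < n)%nat -> ~ P j1 -> ~ P j2 -> j1 = j2) ->
  INR n - 1 <= sumR n (fun j => if excluded_middle_informative (P j) then 1 else 0).
Proof.
  intros Huniq.
  destruct (classic (exists j, (j < n)%nat /\ ~ P j)) as [[j [Hj HPj]] | Hall].
  - rewrite (sumR_split_at _ _ j Hj).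
    destruct (excluded_middle_informative (P j)) as [|_]; [contradiction|].
    pose proof (sumR_split_at n (fun _ => 1) j Hj) as Hones.
    rewrite sumR_const in Hones.
    rewrite (sumR_ext n _ (fun i => if Nat.eqb i j then 0 else 1)); [lra|].
    intros i Hi. destruct (Nat.eqb_spec i j) as [|Hij]; [reflexivity|].
    destruct (excluded_middle_informative (P i)) as [|HPi]; [reflexivity|].
    exfalso. exact (Hij (Huniq i j Hi Hj HPi HPj)).
  - rewrite (sumR_ext n _ (fun _ => 1)), sumR_const; [lra|].
    intros i Hi. destruct (excluded_middle_informative (P i)) as [|HPi]; [reflexivity|].
    exfalso. apply Hall. exists i. auto.
Qed.

Lemma prob_unif_ge_at_most_one_failure n (P : nat -> Prop) :
  (1 <= n)%nat ->
  (forall j1 j2, (j1 < n)%nat -> (j2 < n)%nat -> ~ P j1 -> ~ P j2 -> j1 = j2) ->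
  prob_unif n P >= 1 - 1 / INR n.
Proof.
  intros Hn Huniq. unfold prob_unif.
  assert (Hpos : 0 < INR n) by (apply lt_0_INR; lia).
  apply Rle_ge. replace (1 - 1 / INR n) with ((INR n - 1) / INR n) by (field; lra).
  apply Rmult_le_compat_r; [apply Rlt_le, Rinv_0_lt_compat; lra|].
  exact (sumR_indicator_ge n P Huniq).
Qed.

Lemma finite_argmax n (C : nat -> Prop) (g : nat -> R) :
  (forall i, (i < n)%nat -> ~ C i) \/
  exists i, (i < n)%nat /\ C i /\ forall l, (l < n)%nat -> C l -> g l <= g i.
Proof.
  induction n as [|n IH]; [left; intros; lia|].
  destruct (classic (C n)) as [Cn | nCn].
  - right. destruct IH as [Hnone | [i [Hi [Ci Hmax]]]].
    + exists n. repeat split; auto. intros l Hl Cl.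
      destruct (Nat.eq_dec l n) as [->|]; [lra|]. exfalso. apply (Hnone l); auto; lia.
    + destruct (Rle_dec (g n) (g i)).
      * exists i. repeat split; auto. intros l Hl Cl.
        destruct (Nat.eq_dec l n) as [->|]; [auto|]. apply Hmax; auto; lia.
      * exists n. repeat split; auto. intros l Hl Cl.
        destruct (Nat.eq_dec l n) as [->|]; [lra|].
        assert (g l <= g i) by (apply Hmax; auto; lia). lra.
  - destruct IH as [Hnone | [i [Hi [Ci Hmax]]]].
    + left. intros l Hl. destruct (Nat.eq_dec l n) as [->|]; [auto|]. apply Hnone; lia.
    + right. exists i. repeat split; auto. intros l Hl Cl.
      destruct (Nat.eq_dec l n) as [->|]; [contradiction|]. apply Hmax; auto; lia.
Qed.

Definition budget_above (n : nat) (v b : nat -> R) (S : nat -> bool) (p : R) : R :=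
  sumR n (fun i => if S i then (if Rle_dec p (v i) then b i else 0) else 0).

Section Budgets.

Variables (n : nat) (v b : nat -> R).
Hypothesis hb : forall i, (i < n)%nat -> 0 <= b i.

Lemma budget_above_nonneg S p : 0 <= budget_above n v b S p.
Proof.
  apply sumR_nonneg. intros i Hi.
  destruct (S i); [destruct (Rle_dec p (v i)) | ]; auto; lra.
Qed.

Lemma budget_above_ge_member S p i :
  (i < n)%nat -> S i = true -> p <= v i -> b i <= budget_above n v b S p.
Proof.
  intros Hi HSi Hpi.
  pose proof (sumR_le_term n (fun l => if S l then (if Rle_dec p (v l) then b l else 0) else 0) i)
    as Hterm.
  simpl in Hterm. rewrite HSi in Hterm. destruct (Rle_dec p (v i)); [|contradiction].
  apply Hterm; [|exact Hi]. intros l Hl.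
  destruct (S l); [destruct (Rle_dec p (v l)) | ]; auto; lra.
Qed.

Lemma budget_above_minus1 j p :
  (j < n)%nat ->
  budget_above n v b (allN n) p =
  budget_above n v b (minus1 n j) p + (if Rle_dec p (v j) then b j else 0).
Proof.
  intros Hj. unfold budget_above. rewrite (sumR_split_at _ _ j Hj).
  unfold allN at 2. replace (Nat.ltb j n) with true by (symmetry; apply Nat.ltb_lt; lia).
  f_equal. apply sumR_ext. intros i Hi.
  unfold minus1, allN. replace (Nat.ltb i n) with true by (symmetry; apply Nat.ltb_lt; lia).
  destruct (Nat.eqb i j); reflexivity.
Qed.

Lemma revenue_eq_Rmin S k p :
  0 < p -> revenue n v b S k p = Rmin (budget_above n v b S p) (k * p).
Proof.
  intros Hp. unfold revenue, budget_above.
  rewrite (sumR_ext n _ (fun i => (if S i then (if Rle_dec p (v i) then b i else 0) else 0) / p)).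
  2:{ intros i _. destruct (S i); [destruct (Rle_dec p (v i))|]; unfold Rdiv; ring. }
  rewrite sumR_div. set (x := sumR _ _).
  unfold Rmin. destruct (Rle_dec (x / p) k) as [H1|H1]; destruct (Rle_dec x (k * p)) as [H2|H2].
  - field. lra.
  - exfalso. apply H2. replace x with (x / p * p) by (field; lra).
    apply Rmult_le_compat_r; lra.
  - exfalso. apply H1. replace k with (k * p / p) by (field; lra).
    apply Rmult_le_compat_r; [apply Rlt_le, Rinv_0_lt_compat|]; lra.
  - reflexivity.
Qed.

Lemma revenue_nonneg S k p : 0 < k -> 0 < p -> 0 <= revenue n v b S k p.
Proof.
  intros Hk Hp. rewrite revenue_eq_Rmin by exact Hp.
  pose proof (budget_above_nonneg S p). assert (0 < k * p) by nra.
  apply Rmin_glb; lra.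
Qed.

(* Between two consecutive values the budget term is constant while k p grows,
   so raising p to the next value of an agent never lowers the revenue. *)
Lemma revenue_le_at_value S k p :
  0 < k -> 0 < p ->
  revenue n v b S k p = 0 \/
  exists i, (i < n)%nat /\ S i = true /\ 0 < v i /\
            revenue n v b S k p <= revenue n v b S k (v i).
Proof.
  intros Hk Hp.
  destruct (finite_argmax n (fun l => S l = true /\ p <= v l) (fun l => - v l))
    as [Hnone | [i [Hi [[HSi Hpi] Hleast]]]].
  - left. rewrite revenue_eq_Rmin by exact Hp.
    replace (budget_above n v b S p) with 0.
    + apply Rmin_left. nra.
    + unfold budget_above. transitivity (sumR n (fun _ => 0)); [rewrite sumR_const; ring|].
      apply sumR_ext. intros l Hl. destruct (S l) eqn:HSl; [|reflexivity].
      destruct (Rle_dec p (v l)); [|reflexivity]. exfalso. exact (Hnone l Hl (conj HSl r)).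
  - right. exists i. repeat split; [exact Hi | exact HSi | lra |].
    rewrite !revenue_eq_Rmin by lra.
    replace (budget_above n v b S (v i)) with (budget_above n v b S p).
    + apply Rle_min_compat_l. nra.
    + apply sumR_ext. intros l Hl. destruct (S l) eqn:HSl; [|reflexivity].
      destruct (Rle_dec p (v l)) as [Hpl|Hpl]; destruct (Rle_dec (v i) (v l)) as [Hil|Hil];
        try reflexivity; exfalso.
      * assert (- v l <= - v i) by (apply Hleast; auto). lra.
      * lra.
Qed.

Lemma OPT_exists S k : 0 < k -> exists r, is_OPT n v b S k r.
Proof.
  intros Hk.
  destruct (finite_argmax n (fun i => S i = true /\ 0 < v i) (fun i => revenue n v b S k (v i)))
    as [Hnone | [i [Hi [[HSi Hvi] Hbest]]]].
  - exists 0. split.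
    + exists 1. split; [lra|].
      destruct (revenue_le_at_value S k 1 Hk Rlt_0_1) as [| [i [Hi [HSi [Hvi _]]]]]; [auto|].
      exfalso. exact (Hnone i Hi (conj HSi Hvi)).
    + intros p Hp. destruct (revenue_le_at_value S k p Hk Hp) as [-> | [i [Hi [HSi [Hvi _]]]]];
        [lra|]. exfalso. exact (Hnone i Hi (conj HSi Hvi)).
  - exists (revenue n v b S k (v i)). split; [exists (v i); auto|].
    intros p Hp. destruct (revenue_le_at_value S k p Hk Hp) as [-> | [l [Hl [HSl [Hvl Hle]]]]].
    + apply revenue_nonneg; assumption.
    + assert (revenue n v b S k (v l) <= revenue n v b S k (v i)) by (apply Hbest; auto).
      lra.
Qed.

Lemma OPT_spec S k : 0 < k -> is_OPT n v b S k (OPT n v b S k).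
Proof. intros Hk. unfold OPT. apply epsilon_spec, OPT_exists, Hk. Qed.

End Budgets.

Section Removal.

Variables (n : nat) (v b : nat -> R) (m p : R).
Hypothesis hb : forall i, (i < n)%nat -> 0 <= b i.
Hypothesis hm : 0 < m.
Hypothesis hp : 0 < p.
Hypothesis hopt : revenue n v b (allN n) m p = OPT n v b (allN n) m.

Lemma OPT_minus1_half_drop j :
  (j < n)%nat -> OPT n v b (minus1 n j) m < / 2 * OPT n v b (allN n) m ->
  p <= v j /\ budget_above n v b (allN n) p < 2 * b j.
Proof.
  intros Hj Hdrop.
  destruct (OPT_spec n v b hb (minus1 n j) m hm) as [_ Hmax].
  pose proof (Hmax p hp) as Hrev.
  rewrite <- hopt in Hdrop. rewrite revenue_eq_Rmin in Hrev, Hdrop by exact hp.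
  pose proof (budget_above_minus1 n v b j p Hj) as Hsplit.
  pose proof (budget_above_nonneg n v b hb (minus1 n j) p).
  assert (0 < m * p) by nra.
  destruct (Rle_dec p (v j)) as [Hpj | Hpj].
  - split; [exact Hpj|].
    revert Hrev Hdrop. unfold Rmin. do 2 destruct Rle_dec; intros; lra.
  - exfalso. rewrite Hsplit in Hdrop.
    revert Hrev Hdrop. unfold Rmin. do 2 destruct Rle_dec; intros; lra.
Qed.

Lemma OPT_minus1_half_drop_unique j1 j2 :
  (j1 < n)%nat -> (j2 < n)%nat ->
  OPT n v b (minus1 n j1) m < / 2 * OPT n v b (allN n) m ->
  OPT n v b (minus1 n j2) m < / 2 * OPT n v b (allN n) m ->
  j1 = j2.
Proof.
  intros Hj1 Hj2 Hdrop1 Hdrop2.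
  destruct (OPT_minus1_half_drop j1 Hj1 Hdrop1) as [Hp1 Hb1].
  destruct (OPT_minus1_half_drop j2 Hj2 Hdrop2) as [Hp2 Hb2].
  destruct (Nat.eq_dec j1 j2) as [|Hne]; [assumption|]. exfalso.
  pose proof (budget_above_minus1 n v b j1 p Hj1) as Hsplit.
  destruct (Rle_dec p (v j1)); [|contradiction].
  assert (b j2 <= budget_above n v b (minus1 n j1) p).
  { apply budget_above_ge_member; auto.
    unfold minus1. apply andb_true_intro. split.
    - apply Nat.ltb_lt. exact Hj2.
    - destruct (Nat.eqb_spec j2 j1); [congruence | reflexivity]. }
  lra.
Qed.

End Removal.

Theorem lemma2 (n : nat) (v b : nat -> R) (m : R)
  (hn : (1 <= n)%nat)
  (hv : forall i, (i < n)%nat -> 0 <= v i)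
  (hb : forall i, (i < n)%nat -> 0 <= b i)
  (hm : 0 < m) :
  prob_unif n (fun j => OPT n v b (minus1 n j) m >= / 2 * OPT n v b (allN n) m)
  >= 1 - 1 / INR n.
Proof.
  destruct (OPT_spec n v b hb (allN n) m hm) as [[p [hp hopt]] _].
  apply prob_unif_ge_at_most_one_failure; [exact hn|].
  intros j1 j2 Hj1 Hj2 Hdrop1 Hdrop2.
  apply Rnot_ge_lt in Hdrop1, Hdrop2.
  exact (OPT_minus1_half_drop_unique n v b m p hb hm hp hopt j1 j2 Hj1 Hj2 Hdrop1 Hdrop2).
Qed.
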